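(* Let $C$ be a nonzero $A$-code of length $l$, let $G$ be a matrix whose rows form a basis of divisors of $C$, and let $H$ be the output of the algorithm gen-mat-dual on input $G$. Let $\tilde H$ be the matrix obtained from $H$ by deleting its zero rows, say with $r$ rows, and let $H^R$ be the $r\times l$ matrix with entries $h^R_{ij}=\tilde h_{r-i+1,\,l-j+1}$. Then $H^R$ is the canonical generator matrix of the reciprocal dual $C^{\perp R}=\{(c_l,\ldots,c_1):(c_1,\ldots,c_l)\in C^\perp\}$.
   Context: Let $\mathbb{F}$ be a finite field, $f(x)\in\mathbb{F}[x]$ monic of degree $m$, $A=\mathbb{F}[x]/\langle f(x)\rangle$, elements identified with polynomials of degree $<m$. An $A$-code of length $l$ is an $A$-submodule of $A^l$; $C^\perp=\{a\in A^l:\sum_ia_ic_i=0\ \forall c\in C\}$. For $u\in A^l$, $L_{\mathrm{ind}}(u)$ is the smallest index of a nonzero entry and $L_{\mathrm{coef}}(u)$ that entry. For nonzero $C$, $L_{\mathrm{ind}}(C)=\min_{u\in C}L_{\mathrm{ind}}(u)$; $L_{\mathrm{coef}}(C)$ is the monic polynomial $g$ of minimal degree such that some $c\in C$ has $L_{\mathrm{ind}}(c)=L_{\mathrm{ind}}(C)$ and $L_{\mathrm{coef}}(c)=g$; such $c$ is a leading element. $C^{(1)}=C$, $C^{(n+1)}=\{c\in C^{(n)}:L_{\mathrm{ind}}(c)>L_{\mathrm{ind}}(C^{(n)})\}$ while $C^{(n)}\neq0$; with $k$ largest such that $C^{(k)}\ne0$, a tuple $(g^{(1)},\dots,g^{(k)})$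 with $g^{(j)}$ a leading element of $C^{(j)}$ is a basis of divisors (leading coefficients are then monic divisors of $f$). The canonical generator matrix (CGM) of a nonzero $A$-code is the unique matrix whose rows $g^{(1)},\dots,g^{(k)}$ form a basis of divisors and satisfy $\deg g_{t,j_i}<\deg g_{i,j_i}$ for all $t<i$, where $g_{i,j_i}$ is the leading coefficient of row $i$. Algorithm gen-mat-dual, on input a $k\times l$ matrix $G=(g_{ij})$ whose rows form a basis of divisors of an $A$-code, returns $H$ defined recursively: (1) If the first column of $G$ is zero: if $l=1$, $H=(1)$; otherwise $H=\begin{pmatrix}1&0\\0&H'\end{pmatrix}$, where $H'$ is the output on $G$ with its first column deleted. (2) Otherwise: if $l=1$, $H=(h_{1,1})$ where $h_{1,1}$ is the image in $A$ of $f/g_{1,1}$. If $l>1$: let $H'=I_{l-1}$ if $k=1$, and otherwise let $H'$ be the output on $G$ with its first row and first column deleted; index the entries of $H'$ as $h'_{ij}$, $2\le i\le s$, $2\le j\le l$. Then $H$ has first row $(h_{1,1},0,\ldots,0)$ with $h_{1,1}$ the image of $f/g_{1,1}$, and for $2\le i\le s$ its $i$-th row is $(\alpha_i,h'_{i2},\ldots,h'_{il})$, where $\alpha_i$ is the remainder modulo the polynomial $f/g_{1,1}$ of the polynomial $-\bigl(\sum_{j=2}^l h'_{ij}g_{1j}\bigr)/g_{1,1}$ (entries regarded as polynomials of degree $<m$; this quotient is a polynomial). *)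

(* A = F[x]/<f> is rendered as MathComp's {poly %/ f}
   (qpoly.v): polynomials of size < size f, with multiplication mod f
   (valid as the intended quotient when f is monic with 1 < size f). *)
From HB Require Import structures.
From mathcomp Require Import all_boot all_order all_algebra.
Set Implicit Arguments. Unset Strict Implicit. Unset Printing Implicit Defensive.
Import Order.TTheory GRing.Theory.
Local Open Scope ring_scope.

Section Codes.
Variables (F : finFieldType) (f : {poly F}) (l : nat).
Local Notation A := {poly %/ f}.
Local Notation V := 'rV[A]_l.

Definition is_Acode (C : {set V}) : Prop :=
  [/\ (0 : V) \in C,
      (forall u v, u \in C -> v \in C -> u + v \in C) &
      (forall (a : A) u, u \in C -> a *: u \in C)].

Definition nzset (S : {set V}) : bool := [exists u in S, u != 0].

Definition dual (C : {set V}) : {set V} :=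
  [set a : V | [forall c in C, \sum_(i < l) a 0 i * c 0 i == 0]].

Definition rev_rV (u : V) : V := \row_(j < l) u 0 (rev_ord j).

Definition recip_dual (C : {set V}) : {set V} := [set rev_rV u | u in dual C].

Definition rowseq (u : V) : seq A := [seq u 0 j | j <- enum 'I_l].

(* j-th entry (0-based) regarded as a polynomial of degree < m *)
Definition ent (u : V) (j : nat) : {poly F} := (nth 0 (rowseq u) j : {poly F}).

(* leading index (0-based); equals l for the zero vector (acts as +infinity) *)
Definition Lind (u : V) : nat := find (fun a => a != 0) (rowseq u).

Definition Lcoef (u : V) : {poly F} := ent u (Lind u).

Definition LindS (S : {set V}) : nat := \big[minn/l]_(u in S | u != 0) Lind u.

Definition leading_elt (S : {set V}) (c : V) : Prop :=
  [/\ c \in S, c != 0, Lind c = LindS S, Lcoef c \is monic &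
      forall c', c' \in S -> Lind c' = LindS S -> Lcoef c' \is monic ->
        (size (Lcoef c) <= size (Lcoef c'))%N].

(* filt C n = C^(n+1) *)
Fixpoint filt (C : {set V}) (n : nat) : {set V} :=
  match n with
  | 0 => C
  | n'.+1 => [set c in filt C n' | (LindS (filt C n') < Lind c)%N]
  end.

Definition basis_of_divisors (C : {set V}) (k : nat) (G : 'M[A]_(k, l)) : Prop :=
  (forall i : 'I_k, leading_elt (filt C i) (row i G)) /\ ~~ nzset (filt C k).

Definition is_CGM (C : {set V}) (k : nat) (G : 'M[A]_(k, l)) : Prop :=
  basis_of_divisors C G /\
  forall i t : 'I_k, (t < i)%N ->
    (size (ent (row t G) (Lind (row i G))) < size (ent (row i G) (Lind (row i G))))%N.

End Codes.

Section Algo.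
Variables (F : fieldType) (f : {poly F}).

Definition idseq (n : nat) : seq (seq {poly F}) :=
  mkseq (fun i => mkseq (fun j => ((i == j)%:R : {poly F})) n) n.

Fixpoint gen_mat_dual (l : nat) (G : seq (seq {poly F})) : seq (seq {poly F}) :=
  match l with
  | 0 => [::]
  | l'.+1 =>
    if all (fun r => head 0 r == 0) G then
      (1 :: nseq l' 0) :: map (cons 0) (gen_mat_dual l' (map behead G))
    else
      let g1 := head [::] G in
      let g11 := head 0 g1 in
      let q := f %/ g11 in
      let H' := if size G == 1%N then idseq l'
                else gen_mat_dual l' (map behead (behead G)) in
      ((q %% f) :: nseq l' 0) ::
        map (fun hr => (((- \sum_(j < l') hr`_j * g1`_j.+1) %/ g11) %% q) :: hr) H'
  end.
End Algo.

Section Recip.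
Variables (F : finFieldType) (f : {poly F}) (l k : nat).
Local Notation A := {poly %/ f}.

Definition mx_to_seq (G : 'M[A]_(k, l)) : seq (seq {poly F}) :=
  [seq [seq (G i j : {poly F}) | j <- enum 'I_l] | i <- enum 'I_k].

Definition Htilde (G : 'M[A]_(k, l)) : seq (seq A) :=
  [seq r <- map (map (in_qpoly f)) (gen_mat_dual f l (mx_to_seq G)) | has (fun a => a != 0) r].

Definition HR (G : 'M[A]_(k, l)) : 'M[A]_(size (Htilde G), l) :=
  \matrix_(i < size (Htilde G), j < l)
     nth 0 (nth [::] (Htilde G) (size (Htilde G) - i.+1)) (l - j.+1).
End Recip.

From HB Require Import structures.
From mathcomp Require Import all_boot all_order all_algebra zify.
Local Open Scope ring_scope.
Import GRing.Theory.

(* Let g_1, ..., g_k be the rows of G, with pivots j_1 < ... < j_k and monic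
   leading coefficients d_i.  Minimality of deg d_i forces d_i to divide the
   j_i-th entry of every element of C^(i), so C^(i) = A g_i + C^(i+1); hence the
   dual is cut out by the congruences <a, g_i> = 0 mod f, and d_i divides f.
   Moreover (f/d_i) g_i lies in C^(i+1), so (f/d_i) <a, g_i> = 0 as soon as a is
   orthogonal to g_(i+1), ..., g_k: this is what makes the entries alpha of
   gen-mat-dual solve the congruence of the pivot row.
   Reading rows and columns backwards, as H^R does, gen-mat-dual appends one
   column (and possibly one row) at each recursive step, and induction on l
   shows that the result satisfies the defining properties of a canonical
   generator matrix of the reciprocal dual. *)

Lemma find_nth_first {T : Type} (x0 : T) (p : pred T) (s : seq T) j : (j < size s)%N ->
  (forall i, (i < j)%N -> ~~ p (nth x0 s i)) -> p (nth x0 s j) -> find p s = j.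
Proof.
elim: s j => [//|x s IH] [|j] /= js before pj; first by rewrite pj.
by rewrite (negbTE (before 0%N isT)) (IH j) // => i ij; apply: (before i.+1).
Qed.

Lemma bigminn_le (I : eqType) (r : seq I) (Q : pred I) (F : I -> nat) x0 i :
  i \in r -> Q i -> (\big[minn/x0]_(j <- r | Q j) F j <= F i)%N.
Proof.
elim: r => [//|x r IH]; rewrite in_cons big_cons => /orP[/eqP <- -> | ri Qi].
  exact: geq_minl.
by case: (Q x); [apply: leq_trans (geq_minr _ _) (IH ri Qi) | apply: IH].
Qed.

Lemma modp_submul (F : fieldType) (f a b d : {poly F}) :
  (a %% f - (b %% f) * d) %% f = (a - b * d) %% f.
Proof.
by rewrite [LHS]modpD [RHS]modpD !modpN modp_id [(b %% f) * d]mulrC [b * d]mulrC !modp_mul.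
Qed.

Lemma modp_sum (F : fieldType) (f : {poly F}) I (r : seq I) (G : I -> {poly F}) :
  \sum_(i <- r) (G i %% f) = (\sum_(i <- r) G i) %% f.
Proof.
elim: r => [|x r IH]; first by rewrite !big_nil mod0p.
by rewrite !big_cons IH modpD.
Qed.

Section PolySeq.
Set Implicit Arguments. Unset Strict Implicit. Unset Printing Implicit Defensive.
Variables (F : fieldType) (f : {poly F}).
Hypotheses (monf : f \is monic) (szf : (1 < size f)%N).
Local Notation P := {poly F}.

Definition nzseq (s : seq P) := has (fun p => p != 0) s.
Definition lind (s : seq P) := find (fun p => p != 0) s.
Definition lcoef (s : seq P) := nth 0 s (lind s).
Definition reduced (s : seq P) := all (fun p : P => (size p < size f)%N) s.

Fixpoint dotp (a g : seq P) : P :=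
  match a, g with x :: a', y :: g' => x * y + dotp a' g' | _, _ => 0 end.

Lemma lind_cons0 s : lind (0 :: s) = (lind s).+1.
Proof. by rewrite /lind /= eqxx. Qed.

Lemma lind_consN x s : x != 0 -> lind (x :: s) = 0%N.
Proof. by rewrite /lind /= => ->. Qed.

Lemma lcoef_cons0 s : lcoef (0 :: s) = lcoef s.
Proof. by rewrite /lcoef lind_cons0. Qed.

Lemma lcoef_consN x s : x != 0 -> lcoef (x :: s) = x.
Proof. by move=> x0; rewrite /lcoef lind_consN. Qed.

Lemma nzseq_cons x s : nzseq (x :: s) = (x != 0) || nzseq s.
Proof. by []. Qed.

Lemma nzseq_rcons s x : nzseq (rcons s x) = nzseq s || (x != 0).
Proof. by rewrite /nzseq has_rcons orbC. Qed.

Lemma lind_lt_size s : nzseq s -> (lind s < size s)%N.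
Proof. by rewrite /nzseq has_find. Qed.

Lemma lind_rcons s x : nzseq s -> lind (rcons s x) = lind s.
Proof. by rewrite /lind /nzseq -cats1 find_cat => ->. Qed.

Lemma lcoef_rcons s x : nzseq s -> lcoef (rcons s x) = lcoef s.
Proof. by move=> nzs; rewrite /lcoef lind_rcons // nth_rcons lind_lt_size. Qed.

Lemma nth_nnzseq s j : ~~ nzseq s -> nth 0 s j = 0.
Proof.
rewrite /nzseq => /hasPn s0; case: (ltnP j (size s)) => hj; last by rewrite nth_default.
by apply/eqP; have := s0 _ (mem_nth 0 hj); rewrite negbK.
Qed.

Lemma nnzseqE s : ~~ nzseq s -> s = nseq (size s) 0.
Proof.
move=> s0; apply: (@eq_from_nth _ 0); first by rewrite size_nseq.
by move=> i hi; rewrite nth_nseq hi nth_nnzseq.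
Qed.

Lemma nnzseq_nseq n : ~~ nzseq (nseq n 0).
Proof. by rewrite /nzseq has_nseq eqxx andbF. Qed.

Lemma lind_rcons_nseq n x : x != 0 -> lind (rcons (nseq n 0) x) = n.
Proof.
move=> x0; have /negbTE := nnzseq_nseq n; rewrite /nzseq => nz.
by rewrite /lind -cats1 find_cat nz size_nseq /= x0 addn0.
Qed.

Lemma lcoef_rcons_nseq n x : x != 0 -> lcoef (rcons (nseq n 0) x) = x.
Proof. by move=> x0; rewrite /lcoef lind_rcons_nseq // nth_rcons size_nseq ltnn eqxx. Qed.

Lemma dotp_nseql a n : dotp (nseq n 0) a = 0.
Proof. by elim: n a => [|n IH] [|x a] //=; rewrite mul0r add0r IH. Qed.

Lemma dotp_cons0 x a g : dotp (x :: a) (0 :: g) = dotp a g.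
Proof. by rewrite /= mulr0 add0r. Qed.

Lemma dotp_sum n a g : size a = n -> size g = n ->
  dotp a g = \sum_(j < n) a`_j * g`_j.
Proof.
elim: n a g => [|n IH] [|x a] [|y g] //=; first by rewrite big_ord0.
by move=> [sa] [sg]; rewrite big_ord_recl /= IH.
Qed.

Lemma reduced_cons x s : reduced (x :: s) = (size x < size f)%N && reduced s.
Proof. by []. Qed.

Lemma reduced_rcons s x : reduced (rcons s x) = reduced s && (size x < size f)%N.
Proof. by rewrite /reduced all_rcons andbC. Qed.

Lemma size0_lt_f : (size (0%R : P) < size f)%N.
Proof. by rewrite size_poly0 (ltn_trans _ szf). Qed.

Lemma reduced_nseq n : reduced (nseq n 0).
Proof. by rewrite /reduced all_nseq size0_lt_f orbT. Qed.

Lemma behead_head0 (g : seq P) : head 0 g = 0 -> (0 < size g)%N -> g = 0 :: behead g.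
Proof. by case: g => //= x g ->. Qed.

Definition dual_vec n (G : seq (seq P)) (a : seq P) : Prop :=
  [/\ size a = n, reduced a & forall i, (i < size G)%N -> f %| dotp a (nth [::] G i)].

(* The properties of a basis of divisors that gen_mat_dual relies on. *)
Definition divisor_rows n (G : seq (seq P)) : Prop :=
  [/\ (forall i, (i < size G)%N ->
        [/\ size (nth [::] G i) = n, (lind (nth [::] G i) < n)%N,
            lcoef (nth [::] G i) \is monic & lcoef (nth [::] G i) %| f]),
      (forall i j, (i < j)%N -> (j < size G)%N ->
         (lind (nth [::] G i) < lind (nth [::] G j))%N) &
      (forall i, (i < size G)%N -> forall a,
         (forall j, (i < j)%N -> (j < size G)%N -> f %| dotp a (nth [::] G j)) ->
         size a = n -> reduced a ->
         f %| (f %/ lcoef (nth [::] G i)) * dotp a (nth [::] G i))].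

(* A canonical generator matrix of D whose rows are stored reversed, D being a
   predicate on vectors in their original orientation. *)
Definition canonical_rows n (D : seq P -> Prop) (M : seq (seq P)) : Prop :=
  [/\ (forall i, (i < size M)%N ->
        [/\ size (nth [::] M i) = n, reduced (nth [::] M i), D (rev (nth [::] M i)),
            nzseq (nth [::] M i) & lcoef (nth [::] M i) \is monic]),
      (forall t i, (t < i)%N -> (i < size M)%N ->
         (lind (nth [::] M t) < lind (nth [::] M i))%N),
      (forall c, size c = n -> reduced c -> D (rev c) -> nzseq c ->
         exists2 i, (i < size M)%N &
           lind (nth [::] M i) = lind c /\ lcoef (nth [::] M i) %| lcoef c) &
      (forall t i, (t < i)%N -> (i < size M)%N ->
         (size (nth 0%R (nth [::] M t) (lind (nth [::] M i))) <
          size (lcoef (nth [::] M i)))%N)].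

Lemma canonical_rows_nil D : canonical_rows 0 D [::].
Proof. by split=> // -[]. Qed.

(* One step of gen_mat_dual on reversed rows: each row m gets the new last entry
   beta m, and if b the row (0, ..., 0, z) is added. *)
Definition append_col n (M : seq (seq P)) (beta : seq P -> P) (b : bool) (z : P) :=
  let M' := map (fun m => rcons m (beta m)) M in
  if b then rcons M' (rcons (nseq n 0) z) else M'.

Section AppendColumn.
Variables (n : nat) (D' D : seq P -> Prop) (M : seq (seq P)).
Variables (beta : seq P -> P) (b : bool) (z : P).
Local Notation M' := (append_col n M beta b z).

Hypothesis canM : canonical_rows n D' M.
Hypothesis D_behead : forall x a, D (x :: a) -> D' a.
Hypothesis beta_ext : forall m, D' (rev m) -> size m = n -> reduced m ->
  D (beta m :: rev m) /\ (size (beta m) < size f)%N.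
Hypothesis z_new : b -> [/\ D (z :: nseq n 0), z \is monic & (size z < size f)%N].
Hypothesis z_dvd : forall x, x != 0 -> D (x :: nseq n 0) -> (size x < size f)%N ->
  b /\ z %| x.
Hypothesis beta_lt_z : b -> forall i, (i < size M)%N ->
  (size (beta (nth [::] M i)) < size z)%N.

Lemma size_append_col : size M' = (size M + b)%N.
Proof. by rewrite /append_col; case: b; rewrite ?size_rcons size_map ?addn1 ?addn0. Qed.

Lemma nth_append_col i : nth [::] M' i =
  if (i < size M)%N then rcons (nth [::] M i) (beta (nth [::] M i))
  else if b && (i == size M) then rcons (nseq n 0) z else [::].
Proof.
rewrite /append_col; case: b; last first.
  by case: ltnP => h; [rewrite (nth_map [::]) | rewrite nth_default // size_map].
by rewrite nth_rcons size_map /=; case: ltnP => h //; rewrite (nth_map [::]).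
Qed.

Lemma append_col_new_row i : (i < size M')%N -> (size M <= i)%N -> b /\ i = size M.
Proof.
rewrite size_append_col; case: b => /=; rewrite ?addn0 ?addn1 ?ltnS => hi hi'.
  by split=> //; apply/eqP; rewrite eqn_leq hi hi'.
by rewrite ltnNge hi' in hi.
Qed.

Lemma append_col_old_row t i : (t < i)%N -> (i < size M')%N -> (t < size M)%N.
Proof.
move=> ti hi; rewrite ltnNge; apply/negP => Mt.
have [_ ei] := append_col_new_row hi (leq_trans Mt (ltnW ti)).
by move: ti; rewrite ei ltnNge Mt.
Qed.

Lemma new_row_lead : b ->
  [/\ lind (rcons (nseq n 0) z) = n, lcoef (rcons (nseq n 0) z) = z & z != 0].
Proof.
by move=> /z_new[_ /monic_neq0 z0 _]; rewrite lind_rcons_nseq // lcoef_rcons_nseq.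
Qed.

Lemma append_col_rows i : (i < size M')%N ->
  [/\ size (nth [::] M' i) = n.+1, reduced (nth [::] M' i), D (rev (nth [::] M' i)),
      nzseq (nth [::] M' i) & lcoef (nth [::] M' i) \is monic].
Proof.
move=> hi; have [C1 _ _ _] := canM; rewrite nth_append_col.
case: (ltnP i (size M)) => iM.
  have [s1 r1 d1 n1 m1] := C1 _ iM; have [d2 sb] := beta_ext d1 s1 r1.
  by rewrite size_rcons s1 reduced_rcons r1 sb rev_rcons nzseq_rcons n1 lcoef_rcons.
have [hb ->] := append_col_new_row hi iM; rewrite hb eqxx /=.
have [dz zm sz] := z_new hb; have [_ -> z0] := new_row_lead hb.
rewrite size_rcons size_nseq reduced_rcons reduced_nseq sz rev_rcons rev_nseq.
by rewrite nzseq_rcons z0 orbT.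
Qed.

Lemma append_col_lind t i : (t < i)%N -> (i < size M')%N ->
  (lind (nth [::] M' t) < lind (nth [::] M' i))%N.
Proof.
move=> ti hi; have [C1 C2 _ _] := canM; have tM := append_col_old_row ti hi.
rewrite !nth_append_col tM; have [s1 _ _ n1 _] := C1 _ tM.
case: (ltnP i (size M)) => iM.
  by have [_ _ _ n2 _] := C1 _ iM; rewrite !lind_rcons // C2.
have [hb ->] := append_col_new_row hi iM; rewrite hb eqxx /=.
by have [-> _ _] := new_row_lead hb; rewrite lind_rcons // -s1 lind_lt_size.
Qed.

Lemma append_col_cover c : size c = n.+1 -> reduced c -> D (rev c) -> nzseq c ->
  exists2 i, (i < size M')%N &
    lind (nth [::] M' i) = lind c /\ lcoef (nth [::] M' i) %| lcoef c.
Proof.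
have [C1 _ C3 _] := canM.
case/lastP: c => [//|c x]; rewrite size_rcons => -[sc].
rewrite reduced_rcons rev_rcons nzseq_rcons => /andP[rc sx] dc.
case nzc: (nzseq c) => /= x0.
  have [i iM [e1 e2]] := C3 _ sc rc (D_behead dc) nzc.
  have [_ _ _ n1 _] := C1 _ iM.
  exists i; first by rewrite size_append_col ltn_addr.
  by rewrite nth_append_col iM lind_rcons // lcoef_rcons // lind_rcons // lcoef_rcons.
have ec : c = nseq n 0 by rewrite (nnzseqE (negbT nzc)) sc.
rewrite ec rev_nseq in dc; have [hb zx] := z_dvd x0 dc sx.
exists (size M); first by rewrite size_append_col hb addn1.
rewrite nth_append_col ltnn hb eqxx /=; have [-> -> _] := new_row_lead hb.
by rewrite ec lind_rcons_nseq // lcoef_rcons_nseq.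
Qed.

Lemma append_col_degree t i : (t < i)%N -> (i < size M')%N ->
  (size (nth 0%R (nth [::] M' t) (lind (nth [::] M' i))) <
   size (lcoef (nth [::] M' i)))%N.
Proof.
move=> ti hi; have [C1 _ _ C4] := canM; have tM := append_col_old_row ti hi.
rewrite !nth_append_col tM; have [s1 _ _ n1 _] := C1 _ tM.
case: (ltnP i (size M)) => iM.
  have [s2 _ _ n2 _] := C1 _ iM.
  by rewrite lind_rcons // lcoef_rcons // nth_rcons s1 -s2 lind_lt_size // C4.
have [hb ->] := append_col_new_row hi iM; rewrite hb eqxx /=.
by have [-> -> _] := new_row_lead hb; rewrite nth_rcons s1 ltnn eqxx beta_lt_z.
Qed.

Lemma canonical_rows_append : canonical_rows n.+1 D M'.
Proof.
split; [exact: append_col_rows | exact: append_col_lind |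
        exact: append_col_cover | exact: append_col_degree].
Qed.

End AppendColumn.

Section Cofactor.
Variable d : P.
Hypotheses (mond : d \is monic) (dvd_df : d %| f).

Lemma cofactor_neq0 : f %/ d != 0.
Proof.
apply: contraTneq (monic_neq0 monf) => q0.
by rewrite -(divpK dvd_df) q0 mul0r eqxx.
Qed.

Lemma cofactor_monic : f %/ d \is monic.
Proof. by rewrite -(monicMl _ mond) mulrC divpK. Qed.

Lemma size_cofactorE : size f = (size (f %/ d) + size d).-1.
Proof. by rewrite -{1}(divpK dvd_df) size_Mmonic ?cofactor_neq0. Qed.

Lemma size_cofactor : (size (f %/ d)%R <= size f)%N.
Proof.
have sd : (0 < size d)%N by rewrite size_poly_gt0 monic_neq0.
by rewrite size_cofactorE -subn1 -addnBA // leq_addr.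
Qed.

Lemma cofactor_mod : (f %/ d) %% f != 0 ->
  (f %/ d) %% f = f %/ d /\ (size (f %/ d)%R < size f)%N.
Proof.
move=> qf0; suff lt : (size (f %/ d)%R < size f)%N by rewrite modp_small.
rewrite ltn_neqAle size_cofactor andbT; apply: contra qf0 => /eqP eqs.
have sd1 : size d = 1%N.
  have /idP := size_poly_gt0 d; rewrite monic_neq0 // => sd.
  by move: size_cofactorE; rewrite eqs; lia.
have -> : d = 1.
  by move/eqP: mond; rewrite /lead_coef sd1 /= => d1; rewrite [d]size1_polyC ?sd1 // d1.
by rewrite divp1 modpp.
Qed.

End Cofactor.

(* alpha is the entry the algorithm puts in the first column of a row whose
   other entries have scalar product S with the tail of the pivot row. *)
Lemma alpha_spec d q S : q * d = f -> q != 0 -> d != 0 -> f %| q * S ->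
  f %| ((- S) %/ d) %% q * d + S /\ (size (((- S) %/ d) %% q)%R < size q)%N.
Proof.
move=> qd q0 d0 fqS; split; last by rewrite ltn_modp.
have dS : d %| S by rewrite -(dvdp_mul2l _ _ q0) qd.
set u := (- S) %/ d; have ud : u * d = - S by rewrite divpK // dvdpNr.
have -> : u %% q = u - u %/ q * q by apply/eqP; rewrite eq_sym subr_eq addrC -divp_eq.
rewrite mulrBl ud -mulrA qd addrAC addNr add0r dvdpNr.
exact/dvdp_mull/dvdpp.
Qed.

Lemma dual_vec_nseq n G : dual_vec n G (nseq n 0).
Proof. by split; rewrite ?size_nseq ?reduced_nseq // => i _; rewrite dotp_nseql dvdp0. Qed.

Lemma divisor_rows_behead n g G : divisor_rows n (g :: G) -> divisor_rows n G.
Proof.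
move=> [I1 I2 I3]; split=> [i|i j|i iG a ha]; [exact: (I1 i.+1) | exact: (I2 i.+1 j.+1) |].
by apply: (I3 i.+1 iG) => -[|j] //; apply: ha.
Qed.

Section ZeroColumn.
Variables (n : nat) (G : seq (seq P)).
Hypothesis col0 : forall i, (i < size G)%N -> nth [::] G i = 0 :: behead (nth [::] G i).

Lemma divisor_rows_drop_col0 : divisor_rows n.+1 G -> divisor_rows n (map behead G).
Proof.
move=> [I1 I2 I3]; split; rewrite size_map.
- move=> i iG; rewrite (nth_map [::]) //.
  have [s1 l1 m1 d1] := I1 i iG; move: s1 l1 m1 d1.
  by rewrite col0 // lind_cons0 lcoef_cons0 /= => -[-> l1 m1 d1].
- move=> i j ij jG; rewrite !(nth_map [::]) //; last exact: ltn_trans ij jG.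
  by have := I2 i j ij jG; rewrite (col0 (ltn_trans ij jG)) (col0 jG) !lind_cons0.
- move=> i iG a ha sa ra; rewrite (nth_map [::]) //.
  have := I3 i iG (0 :: a); rewrite {1 2}(col0 iG) lcoef_cons0 dotp_cons0; apply.
  + move=> j ij jG; rewrite (col0 jG) dotp_cons0.
    by have := ha j ij jG; rewrite (nth_map [::]).
  + by rewrite /= sa.
  + by rewrite reduced_cons ra size0_lt_f.
Qed.

Lemma dual_vec_col0 x a : dual_vec n.+1 G (x :: a) <->
  (size x < size f)%N /\ dual_vec n (map behead G) a.
Proof.
rewrite /dual_vec reduced_cons size_map; split.
- move=> [[sa] /andP[sx ra] ha]; split=> //; split=> // i iG.
  by rewrite (nth_map [::]) // -(dotp_cons0 x) -col0 // ha.
- move=> [sx [sa ra ha]]; split; [by rewrite /= sa | by rewrite sx ra |].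
  by move=> i iG; rewrite col0 // dotp_cons0 -(nth_map [::] [::]) // ha.
Qed.

Lemma dual_vec_pivot d g x a : dual_vec n.+1 ((d :: g) :: G) (x :: a) <->
  [/\ (size x < size f)%N, dual_vec n (map behead G) a & f %| x * d + dotp a g].
Proof.
rewrite /dual_vec reduced_cons size_map; split.
- move=> [[sa] /andP[sx ra] ha]; split=> //; last exact: (ha 0%N).
  split=> // i iG.
  by rewrite (nth_map [::]) // -(dotp_cons0 x) -col0 //; apply: (ha i.+1).
- move=> [sx [sa ra ha] h0]; split; [by rewrite /= sa | by rewrite sx ra |].
  move=> -[|i] // iG; rewrite ltnS in iG.
  change (f %| dotp (x :: a) (nth [::] G i)).
  by rewrite col0 // dotp_cons0 -(nth_map [::] [::]) // ha.
Qed.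

End ZeroColumn.

Lemma gen_mat_dual_nil n : gen_mat_dual f n [::] = idseq F n.
Proof.
elim: n => [//|n IH] /=; rewrite IH /idseq.
apply: (@eq_from_nth _ [::]); first by rewrite [size (_ :: _)]/= size_map !size_mkseq.
move=> i; rewrite [size (_ :: _)]/= size_map size_mkseq ltnS => hi.
case: i hi => [|i] hi.
  rewrite nth_mkseq // [nth _ _ 0]/=.
  apply: (@eq_from_nth _ 0); first by rewrite size_mkseq [size _]/= size_nseq.
  move=> j; rewrite [size _]/= size_nseq ltnS => hj; rewrite nth_mkseq //.
  by case: j hj => [|j] hj //=; rewrite nth_nseq hj.
rewrite [nth _ _ i.+1]/= (nth_map [::]) ?size_mkseq // !nth_mkseq //.
apply: (@eq_from_nth _ 0); first by rewrite [size (_ :: _)]/= !size_mkseq.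
move=> j; rewrite [size (_ :: _)]/= size_mkseq ltnS => hj; rewrite nth_mkseq //.
by case: j hj => [|j] hj //=; rewrite nth_mkseq.
Qed.

Definition recip_rows (H : seq (seq P)) := rev (map rev (filter nzseq H)).

Lemma recip_rows_cons x H :
  recip_rows (x :: H) = if nzseq x then rcons (recip_rows H) (rev x) else recip_rows H.
Proof. by rewrite /recip_rows /=; case: ifP => // _; rewrite /= rev_cons. Qed.

Lemma recip_rows_map (phi : seq P -> seq P) H : (forall r, nzseq (phi r) = nzseq r) ->
  recip_rows (map phi H) = map (fun m => rev (phi (rev m))) (recip_rows H).
Proof.
move=> nz_phi; rewrite /recip_rows filter_map (eq_filter (a2 := nzseq)) //.
by rewrite map_rev -!map_comp; congr rev; apply: eq_map => x /=; rewrite revK.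
Qed.

Definition gen_mat_dual_spec n := forall G, divisor_rows n G ->
  canonical_rows n (dual_vec n G) (recip_rows (gen_mat_dual f n G)).

Lemma gen_mat_dual_zero_col n G : gen_mat_dual_spec n ->
  divisor_rows n.+1 G -> all (fun r => head 0 r == 0) G ->
  canonical_rows n.+1 (dual_vec n.+1 G)
    (recip_rows ((1 :: nseq n 0) :: map (cons 0) (gen_mat_dual f n (map behead G)))).
Proof.
move=> IH divG /allP G0; have [I1 _ _] := divG.
have col0 i : (i < size G)%N -> nth [::] G i = 0 :: behead (nth [::] G i).
  move=> iG; apply: behead_head0; first exact/eqP/G0/mem_nth.
  by have [-> _ _ _] := I1 i iG.
have dualG := dual_vec_col0 n col0.
rewrite recip_rows_cons recip_rows_map => [|r]; last by rewrite nzseq_cons eqxx.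
rewrite nzseq_cons oner_neq0 rev_cons rev_nseq.
under eq_map => m do rewrite rev_cons revK.
apply: (canonical_rows_append (beta := fun _ => 0) (b := true)).
- exact/IH/divisor_rows_drop_col0.
- by move=> x a /dualG[].
- by move=> m dm sm rm; rewrite size0_lt_f; split=> //; apply/dualG; rewrite size0_lt_f.
- move=> _; rewrite monic1 size_poly1; split=> //.
  by apply/dualG; rewrite size_poly1; split=> //; apply: dual_vec_nseq.
- by move=> x _ _ _; rewrite dvd1p.
- by move=> _ i _; rewrite size_poly0 size_poly1.
Qed.

Lemma divisor_rows_pivot n d g G : divisor_rows n.+1 ((d :: g) :: G) ->
  ~~ all (fun r => head 0 r == 0) ((d :: g) :: G) ->
  [/\ d != 0, size g = n, d \is monic, d %| f &
      forall i, (i < size G)%N -> nth [::] G i = 0 :: behead (nth [::] G i)].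
Proof.
move=> [I1 I2 _] hall; have [[sg] lg mg dg] := I1 0%N isT.
have G0 i : (i < size G)%N -> head 0 (nth [::] G i) = 0.
  move=> iG; have [s1 _ _ _] := I1 i.+1 iG; have := I2 0%N i.+1 isT iG.
  move: s1; rewrite [nth _ _ i.+1]/= [nth _ _ 0]/=.
  by case: (nth [::] G i) => [|x r] //= _; case: (eqVneq x 0) => // x0; rewrite lind_consN.
have d0 : d != 0.
  apply: contra hall => /eqP d0; rewrite /= d0 eqxx /=.
  by apply/(all_nthP [::]) => i iG; rewrite G0.
move: mg dg; rewrite [nth _ _ 0]/= lcoef_consN // => mg dg; split=> // i iG.
by apply: behead_head0; [apply: G0 | have [-> _ _ _] := I1 i.+1 iG].
Qed.

Lemma dual_vec_pivot_cofactor n d g G a : divisor_rows n.+1 ((d :: g) :: G) -> d != 0 ->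
  (forall i, (i < size G)%N -> nth [::] G i = 0 :: behead (nth [::] G i)) ->
  dual_vec n (map behead G) a -> f %| (f %/ d) * dotp a g.
Proof.
move=> [_ _ I3] d0 col0 [sa ra ha].
have := I3 0%N isT (0 :: a); rewrite [nth _ _ 0]/= lcoef_consN // /= mul0r add0r.
apply; [|by rewrite /= sa | by rewrite size0_lt_f].
move=> -[|j] // _ jG; change (f %| dotp (0 :: a) (nth [::] G j)).
by rewrite col0 // dotp_cons0 -(nth_map [::] [::]) // ha // size_map.
Qed.

Lemma gen_mat_dual_pivot n d g G : gen_mat_dual_spec n ->
  divisor_rows n.+1 ((d :: g) :: G) -> ~~ all (fun r => head 0 r == 0) ((d :: g) :: G) ->
  canonical_rows n.+1 (dual_vec n.+1 ((d :: g) :: G))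
    (recip_rows (((f %/ d) %% f :: nseq n 0) ::
      map (fun r => (((- \sum_(j < n) r`_j * g`_j) %/ d) %% (f %/ d)) :: r)
        (if size ((d :: g) :: G) == 1%N then idseq F n
         else gen_mat_dual f n (map behead G)))).
Proof.
move=> IH divG hall; have [d0 sg mg dg col0] := divisor_rows_pivot divG hall.
have dualG := dual_vec_pivot n col0 d g.
set q := f %/ d; have qd : q * d = f := divpK dg; have q0 : q != 0 := cofactor_neq0 dg.
set alpha := fun r : seq P => ((- \sum_(j < n) r`_j * g`_j) %/ d) %% q.
have -> : (if size ((d :: g) :: G) == 1%N then idseq F n
           else gen_mat_dual f n (map behead G)) = gen_mat_dual f n (map behead G).
  by case: (G) => [|? ?] //=; rewrite gen_mat_dual_nil.
rewrite recip_rows_cons recip_rows_map => [|r]; last first.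
  rewrite nzseq_cons; case: (boolP (nzseq r)) => nzr; first by rewrite orbT.
  rewrite orbF big1 => [|j _]; last by rewrite (nth_nnzseq _ nzr) mul0r.
  by rewrite oppr0 div0p mod0p eqxx.
rewrite nzseq_cons (negbTE (nnzseq_nseq n)) orbF rev_cons rev_nseq.
under eq_map => m do rewrite rev_cons revK.
(* The new row (f/d, 0, ..., 0) vanishes in A exactly when d = 1. *)
apply: (canonical_rows_append (beta := fun m => alpha (rev m)) (b := q %% f != 0)).
- exact/IH/divisor_rows_drop_col0/divisor_rows_behead/divG.
- by move=> x a /dualG[].
- move=> m dm sm rm; have srm : size (rev m) = n by rewrite size_rev.
  have [dv sa] := alpha_spec qd q0 d0 (dual_vec_pivot_cofactor divG d0 col0 dm).
  have sa' := leq_trans sa (size_cofactor mg dg).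
  by rewrite /alpha -(dotp_sum srm sg); split=> //; apply/dualG.
- move=> qf0; have [-> sq] := cofactor_mod mg dg qf0.
  split=> //; last exact: cofactor_monic mg dg.
  by apply/dualG; rewrite dotp_nseql addr0 qd dvdpp; split=> //; apply: dual_vec_nseq.
- move=> x x0 /dualG[_ _] + sx; rewrite dotp_nseql addr0 -{1}qd dvdp_mul2r // => qx.
  case: (eqVneq (q %% f) 0) => [/modp_eq0P fq | qf0]; last by have [-> _] := cofactor_mod mg dg qf0.
  by have := dvdp_leq x0 (dvdp_trans fq qx); rewrite leqNgt sx.
- by move=> qf0 i _; have [-> _] := cofactor_mod mg dg qf0; rewrite ltn_modp.
Qed.

Theorem gen_mat_dual_canonical n : gen_mat_dual_spec n.
Proof.
elim: n => [|n IH] G divG; first exact: canonical_rows_nil.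
rewrite [gen_mat_dual f n.+1 G]/=; case: ifP => hall.
  exact: gen_mat_dual_zero_col.
case: G divG hall => [//|[|d g] G] divG hall.
  by have [/(_ 0%N isT) [] ] := divG.
by apply: gen_mat_dual_pivot => //; rewrite hall.
Qed.

Lemma canonical_recip_rows n D H r : canonical_rows n D (recip_rows H) ->
  r \in filter nzseq H -> size r = n /\ reduced r.
Proof.
move=> [rows _ _ _] rH; have : rev r \in recip_rows H by rewrite mem_rev map_f.
rewrite -index_mem => /rows[]; rewrite nth_index ?mem_rev ?map_f // size_rev.
by rewrite /reduced all_rev.
Qed.

End PolySeq.

Arguments nzseq {F} s.

Section RowEntries.
Set Implicit Arguments. Unset Strict Implicit. Unset Printing Implicit Defensive.
Variables (F : finFieldType) (f : {poly F}).
Hypotheses (monf : f \is monic) (szf : (1 < size f)%N).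
Local Notation P := {poly F}.
Local Notation A := {poly %/ f}.
Variable l : nat.
Local Notation V := 'rV[A]_l.

Lemma mk_monicE : mk_monic f = f.
Proof. by rewrite /mk_monic szf monf. Qed.

Lemma rmodp_mk_monic p : Pdiv.Ring.rmodp p (mk_monic f) = p %% f.
Proof. by rewrite mk_monicE (Pdiv.IdomainMonic.modpE monf). Qed.

Lemma qpoly_mulE (a b : A) : ((a * b : A) : P) = ((a : P) * (b : P)) %% f.
Proof. by rewrite poly_of_qpolyM rmodp_mk_monic. Qed.

Lemma in_qpolyE (p : P) : (in_qpoly f p : P) = p %% f.
Proof. exact: rmodp_mk_monic. Qed.

Lemma size_qpoly (a : A) : (size (a : P) < size f)%N.
Proof. by apply: leq_trans (size_mk_monic a) _; rewrite mk_monicE. Qed.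

Lemma in_qpoly_id (p : P) : (size p < size f)%N -> (in_qpoly f p : P) = p.
Proof. by move=> sp; rewrite in_qpolyE modp_small. Qed.

Lemma qpoly_submulE (a b x : A) :
  ((a - x * b : A) : P) = ((a : P) - (x : P) * (b : P)) %% f.
Proof.
have -> : ((a - x * b : A) : P) = (a : P) - ((x * b : A) : P) by rewrite raddfB.
by rewrite qpoly_mulE modpD modpN (modp_small (size_qpoly a)).
Qed.

Definition entries (u : V) : seq P := [seq (u 0 j : P) | j <- enum 'I_l].

Lemma size_entries u : size (entries u) = l.
Proof. by rewrite size_map size_enum_ord. Qed.

Lemma nth_entries u (i : 'I_l) : nth 0 (entries u) i = u 0 i.
Proof. by rewrite (nth_map i) ?size_enum_ord // nth_ord_enum. Qed.

Lemma entries_rowseq u : entries u = map val (rowseq u).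
Proof. by rewrite /rowseq -map_comp. Qed.

Lemma Lind_entries u : Lind u = lind (entries u).
Proof. by rewrite /Lind /lind entries_rowseq (find_map val); apply: eq_find. Qed.

Lemma ent_entries u j : ent u j = nth 0 (entries u) j.
Proof.
rewrite /ent entries_rowseq; move: (rowseq u) => s.
case: (ltnP j (size s)) => js; first by rewrite (nth_map 0 0).
by rewrite !nth_default ?size_map.
Qed.

Lemma Lcoef_entries u : Lcoef u = lcoef (entries u).
Proof. by rewrite /Lcoef /lcoef ent_entries Lind_entries. Qed.

Lemma reduced_entries u : reduced f (entries u).
Proof. by apply/allP => x /mapP[j _ ->]; apply: size_qpoly. Qed.

Lemma nzseq_entries u : nzseq (entries u) = (u != 0).
Proof.
apply/hasP/idP => [[x /mapP[j _ ->]] | u0].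
  by apply: contra => /eqP ->; rewrite mxE.
have [j uj0] : exists j, u 0 j != 0.
  apply/existsP; apply: contraR u0; rewrite negb_exists => /forallP u0.
  by apply/eqP/rowP => j; rewrite mxE; apply/eqP; have := u0 j; rewrite negbK.
by exists (u 0 j : P); first by apply/mapP; exists j; rewrite ?mem_enum.
Qed.

Lemma entries_rev_rV u : entries (rev_rV u) = rev (entries u).
Proof.
apply: (@eq_from_nth _ 0); first by rewrite size_rev !size_entries.
move=> j; rewrite size_entries => jl.
rewrite -[j]/(nat_of_ord (Ordinal jl)) nth_entries mxE nth_rev ?size_entries //.
by rewrite -[(l - _)%N]/(nat_of_ord (rev_ord (Ordinal jl))) nth_entries.
Qed.

Lemma rev_rVK : involutive (@rev_rV _ f l).
Proof. by move=> u; apply/rowP => j; rewrite !mxE rev_ordK. Qed.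

Lemma Lind_lt (u : V) : u != 0 -> (Lind u < l)%N.
Proof.
by rewrite -nzseq_entries Lind_entries -[X in (_ < X)%N](size_entries u); apply: lind_lt_size.
Qed.

Lemma Lind0 : Lind (0 : V) = l.
Proof.
rewrite /Lind hasNfind; first by rewrite /rowseq size_map size_enum_ord.
by apply/hasPn => x /mapP[j _ ->]; rewrite mxE eqxx.
Qed.

Lemma LindE (u : V) (j : 'I_l) : (forall i : 'I_l, (i < j)%N -> u 0 i = 0) ->
  u 0 j != 0 -> Lind u = j /\ Lcoef u = (u 0 j : P).
Proof.
move=> before uj0; have Lu : Lind u = j.
  rewrite Lind_entries; apply: (find_nth_first 0); first by rewrite size_entries.
    move=> i ij; have il : (i < l)%N := ltn_trans ij (ltn_ord j).
    by rewrite -[i]/(nat_of_ord (Ordinal il)) nth_entries before // negbK.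
  by rewrite nth_entries.
by rewrite Lcoef_entries /lcoef -Lind_entries Lu nth_entries.
Qed.

Lemma entry_lt_Lind (u : V) (i : 'I_l) : (i < Lind u)%N -> u 0 i = 0.
Proof.
rewrite Lind_entries => /(before_find 0); rewrite nth_entries.
by move/negbFE => ui0; apply/eqP.
Qed.

Lemma Lind_gtP (u : V) t : (t < l)%N ->
  (t < Lind u)%N <-> (forall j : 'I_l, (j <= t)%N -> u 0 j = 0).
Proof.
move=> tl; split=> [tu j jt | u0]; first exact/entry_lt_Lind/(leq_ltn_trans jt).
rewrite ltnNge; apply/negP => ut; have ul : (Lind u < l)%N := leq_ltn_trans ut tl.
have := ul; rewrite Lind_entries -[X in (_ < X)%N](size_entries u) -has_find.
move=> /(nth_find 0).
rewrite -/(lind _) -Lind_entries -[Lind u]/(nat_of_ord (Ordinal ul)) nth_entries.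
by rewrite u0 ?eqxx.
Qed.

Definition dot (a c : V) : A := \sum_(i < l) a 0 i * c 0 i.

Lemma dot_entries a c : (dot a c : P) = dotp (entries a) (entries c) %% f.
Proof.
rewrite /dot poly_of_qpoly_sum (dotp_sum (n := l)) ?size_entries //.
under eq_bigr do rewrite qpoly_mulE.
by rewrite -modp_sum; apply: eq_bigr => i _; rewrite !nth_entries.
Qed.

Lemma dot_eq0 a c : (dot a c == 0) = (f %| dotp (entries a) (entries c)).
Proof. by rewrite -[dot a c == 0]/((dot a c : P) == 0) dot_entries; apply/eqP/modp_eq0P. Qed.

Lemma dotD a u v : dot a (u + v) = dot a u + dot a v.
Proof. by rewrite /dot -big_split; apply: eq_bigr => i _; rewrite mxE mulrDr. Qed.

Lemma dotZ a x u : dot a (x *: u) = x * dot a u.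
Proof. by rewrite /dot mulr_sumr; apply: eq_bigr => i _; rewrite mxE mulrCA. Qed.

Lemma dot0 a : dot a 0 = 0.
Proof. by rewrite /dot big1 // => i _; rewrite mxE mulr0. Qed.

Lemma LindS_le (S : {set V}) c : c \in S -> c != 0 -> (LindS S <= Lind c)%N.
Proof. by move=> cS c0; apply: bigminn_le; rewrite ?mem_index_enum ?cS. Qed.

Lemma LindS_ge (S : {set V}) x : (x <= l)%N ->
  (forall c, c \in S -> c != 0 -> (x <= Lind c)%N) -> (x <= LindS S)%N.
Proof.
move=> xl xS; apply: (big_ind (fun m => x <= m)%N) => // [a b xa xb | c /andP[]].
  by rewrite leq_min xa xb.
exact: xS.
Qed.

Lemma in_filtS (S : {set V}) n c :
  (c \in filt S n.+1) = (c \in filt S n) && (LindS (filt S n) < Lind c)%N.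
Proof. by rewrite /= inE. Qed.

Section CanonicalCriterion.
Variables (S : {set V}) (r : nat) (M : 'M[A]_(r, l)).
Hypotheses (rowM_in : forall i, row i M \in S) (rowM_neq0 : forall i, row i M != 0).
Hypothesis rowM_monic : forall i, Lcoef (row i M) \is monic.
Hypothesis LindM_incr : forall t i : 'I_r, (t < i)%N -> (Lind (row t M) < Lind (row i M))%N.
Hypothesis rowM_cover : forall c, c \in S -> c != 0 ->
  exists i, Lind c = Lind (row i M) /\ Lcoef (row i M) %| Lcoef c.

Lemma LindM_mono (t i : 'I_r) : (t <= i)%N -> (Lind (row t M) <= Lind (row i M))%N.
Proof.
rewrite leq_eqVlt => /orP[/eqP ti | ti]; last exact/ltnW/LindM_incr.
by rewrite (val_inj ti).
Qed.

Definition after_rows n c := c \in S /\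
  forall t : 'I_r, (t < n)%N -> (Lind (row t M) < Lind c)%N.

Lemma LindS_after_rows n (nr : (n < r)%N) : (forall c, c \in filt S n <-> after_rows n c) ->
  LindS (filt S n) = Lind (row (Ordinal nr) M).
Proof.
move=> filtE; apply/eqP; rewrite eqn_leq; apply/andP; split.
  apply: LindS_le => //; apply/filtE; split=> // t tn.
  exact: (LindM_incr (i := Ordinal nr) tn).
apply: LindS_ge; first exact/ltnW/Lind_lt.
move=> c /filtE[cS ct] c0; have [i [ci _]] := rowM_cover cS c0.
rewrite ci; apply: LindM_mono; rewrite /= leqNgt; apply/negP => ni.
by have := ct i ni; rewrite ci ltnn.
Qed.

Lemma filt_after_rows n : (n <= r)%N -> forall c, c \in filt S n <-> after_rows n c.
Proof.
elim: n => [|n IH] nr c; first by split=> [cS | []] //; split.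
have {}IH := IH (ltnW nr); rewrite in_filtS (LindS_after_rows nr IH); split.
  move=> /andP[/IH[cS ct] Mc]; split=> // t; rewrite ltnS leq_eqVlt.
  by case/orP=> [/eqP tn | /ct //]; rewrite (_ : t = Ordinal nr) //; apply: val_inj.
move=> [cS ct]; apply/andP; split; last exact: ct.
by apply/IH; split=> // t tn; apply/ct/ltnW.
Qed.

Lemma rows_basis_of_divisors : basis_of_divisors S M.
Proof.
split=> [i | ]; last first.
  apply/existsP => -[c /andP[/(filt_after_rows (leqnn r))[cS ct] c0]].
  by have [i [ci _]] := rowM_cover cS c0; have := ct i (ltn_ord i); rewrite ci ltnn.
have ir := ltn_ord i; have filtE := filt_after_rows (ltnW ir).
have LSi := LindS_after_rows ir filtE; rewrite (_ : Ordinal ir = i) in LSi; last exact: val_inj.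
split=> // [| c' c'i Lc' mc'].
  by apply/filtE; split=> // t; apply: LindM_incr.
have c'0 : c' != 0.
  apply/eqP => c'0; move: Lc'; rewrite c'0 Lind0 LSi => iL.
  by have := Lind_lt (rowM_neq0 i); rewrite -iL ltnn.
have [cS _] := (filtE c').1 c'i; have [t [Lt dvd_t]] := rowM_cover cS c'0.
have <- : t = i.
  move: Lt; rewrite Lc' LSi; case: (ltngtP t i) => [ti | it | /val_inj //] Lti.
    by have := LindM_incr ti; rewrite Lti ltnn.
  by have := LindM_incr it; rewrite Lti ltnn.
by apply: dvdp_leq => //; apply: monic_neq0.
Qed.

Lemma is_CGM_rows : (forall t i : 'I_r, (t < i)%N ->
    (size (ent (row t M) (Lind (row i M))) < size (Lcoef (row i M)))%N) ->
  is_CGM S M.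
Proof. by move=> deg; split; [exact: rows_basis_of_divisors | move=> i t; apply: deg]. Qed.

End CanonicalCriterion.

Lemma filt_subset (S : {set V}) m n : (m <= n)%N -> filt S n \subset filt S m.
Proof.
move/subnKC <-; elim: (n - m)%N => [|t IH]; first by rewrite addn0 subxx.
by apply: subset_trans IH; rewrite addnS; apply/subsetP => x; rewrite in_filtS => /andP[].
Qed.

Section BasisOfDivisors.
Variables (k : nat) (C : {set V}) (G : 'M[A]_(k, l)).
Hypotheses (codeC : is_Acode C) (basisG : basis_of_divisors C G).

Lemma leading_row (i : 'I_k) : leading_elt (filt C i) (row i G).
Proof. by case: basisG. Qed.

Lemma row_neq0 (i : 'I_k) : row i G != 0.
Proof. by case: (leading_row i). Qed.

Lemma row_in_filt (i : 'I_k) : row i G \in filt C i.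
Proof. by case: (leading_row i). Qed.

Lemma LindS_filt (i : 'I_k) : LindS (filt C i) = Lind (row i G).
Proof. by case: (leading_row i). Qed.

Lemma Lcoef_row_monic (i : 'I_k) : Lcoef (row i G) \is monic.
Proof. by case: (leading_row i). Qed.

Definition pivot (i : 'I_k) : 'I_l := Ordinal (Lind_lt (row_neq0 i)).

Lemma Lcoef_rowE (i : 'I_k) : Lcoef (row i G) = (row i G 0 (pivot i) : P).
Proof.
by rewrite Lcoef_entries /lcoef -Lind_entries -[Lind _]/(nat_of_ord (pivot i)) nth_entries.
Qed.

Lemma filt_Acode n : (n <= k)%N -> is_Acode (filt C n).
Proof.
elim: n => [|n IH] nk; first exact: codeC.
have [C0 CD CZ] := IH (ltnW nk); pose i := Ordinal nk.
have Li := LindS_filt i; have Ll := Lind_lt (row_neq0 i).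
split; first by rewrite in_filtS C0 Li Lind0.
- move=> u v; rewrite !in_filtS Li => /andP[uC /(Lind_gtP _ Ll) u0] /andP[vC /(Lind_gtP _ Ll) v0].
  by rewrite CD //=; apply/(Lind_gtP _ Ll) => j ji; rewrite mxE u0 // v0 // addr0.
- move=> a u; rewrite !in_filtS Li => /andP[uC /(Lind_gtP _ Ll) u0].
  by rewrite CZ //=; apply/(Lind_gtP _ Ll) => j ji; rewrite mxE u0 // mulr0.
Qed.

Lemma Lind_row_le (i : 'I_k) c : c \in filt C i -> (Lind (row i G) <= Lind c)%N.
Proof.
case: (eqVneq c 0) => [-> _ | c0 ci]; last by rewrite -LindS_filt LindS_le.
by rewrite Lind0 ltnW // Lind_lt // row_neq0.
Qed.

Lemma subr_row_in_filt (i : 'I_k) c x : c \in filt C i -> c - x *: row i G \in filt C i.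
Proof.
move=> ci; have [_ CD CZ] := filt_Acode (ltnW (ltn_ord i)).
by rewrite -scaleNr CD // CZ // row_in_filt.
Qed.

Lemma subr_row_lt_pivot (i : 'I_k) c x (j : 'I_l) : c \in filt C i -> (j < pivot i)%N ->
  (c - x *: row i G) 0 j = 0.
Proof.
move=> ci ji; rewrite !mxE (entry_lt_Lind (u := c)); last exact: leq_trans ji (Lind_row_le ci).
by have := entry_lt_Lind (u := row i G) ji; rewrite mxE => ->; rewrite mulr0 subr0.
Qed.

Lemma subr_row_pivot (i : 'I_k) c x : ((c - x *: row i G) 0 (pivot i) : P) =
  ((c 0 (pivot i) : P) - (x : P) * Lcoef (row i G)) %% f.
Proof. by rewrite Lcoef_rowE !mxE qpoly_submulE. Qed.

(* Dividing by the leading coefficient and subtracting the corresponding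
   multiple of the row leaves an element of C^(i) whose pivot entry is the
   remainder; normalised, it would contradict the minimality of deg Lcoef. *)
Lemma Lcoef_row_dvd (i : 'I_k) c e : c \in filt C i -> e %% f = (c 0 (pivot i) : P) ->
  Lcoef (row i G) %| e.
Proof.
move=> ci ef; set d := Lcoef (row i G).
have d0 : d != 0 by apply/monic_neq0/Lcoef_row_monic.
have df : (size d < size f)%N by rewrite /d Lcoef_rowE size_qpoly.
set R := e %% d; have Rd : (size R < size d)%N by rewrite ltn_modp.
set c2 := c - in_qpoly f (e %/ d) *: row i G.
have c2i : c2 \in filt C i by apply: subr_row_in_filt.
have c2R : (c2 0 (pivot i) : P) = R.
  rewrite subr_row_pivot in_qpolyE -ef modp_submul.
  rewrite [e in e - _](divp_eq e d) addrAC subrr add0r.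
  by rewrite modp_small // (ltn_trans Rd).
apply/modp_eq0P/eqP/negPn/negP => R0.
set c3 := in_qpoly f (lead_coef R)^-1%:P *: c2.
have c3i : c3 \in filt C i by have [_ _ CZ] := filt_Acode (ltnW (ltn_ord i)); apply: CZ.
set R3 := (lead_coef R)^-1 *: R.
have sR3 : size R3 = size R by rewrite size_scale // invr_eq0 lead_coef_eq0.
have mR3 : R3 \is monic by rewrite monicE lead_coefZ mulVf // lead_coef_eq0.
have c3R : (c3 0 (pivot i) : P) = R3.
  rewrite mxE qpoly_mulE c2R in_qpolyE mulrC modp_mul mulrC mul_polyC modp_small //.
  by rewrite sR3 (ltn_trans Rd).
have [Lc3 Lcoef_c3] : Lind c3 = pivot i /\ Lcoef c3 = (c3 0 (pivot i) : P).
  apply: LindE => [j ji | ]; first by rewrite mxE subr_row_lt_pivot // mulr0.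
  by apply/eqP => c30; move: (monic_neq0 mR3); rewrite -c3R c30 eqxx.
have [_ _ _ _ minLcoef] := leading_row i.
have := minLcoef c3 c3i; rewrite Lc3 LindS_filt Lcoef_c3 c3R => /(_ erefl mR3).
by rewrite sR3 leqNgt Rd.
Qed.

Lemma filt_k_eq0 c : c \in filt C k -> c = 0.
Proof.
move=> ck; apply/eqP/negPn/negP => c0; have [_ /negP] := basisG.
by apply; apply/existsP; exists c; rewrite ck c0.
Qed.

(* By induction on k - n: subtracting a multiple of row n moves c into C^(n+1). *)
Lemma dot_filt_eq0 n : (n <= k)%N -> forall a,
  (forall i : 'I_k, (n <= i)%N -> dot a (row i G) = 0) ->
  forall c, c \in filt C n -> dot a c = 0.
Proof.
move=> nk a; move: {2}(k - n)%N (erefl (k - n)%N) => m.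
elim: m n nk => [|m IH] n nk km a0 c cn.
  have nk' : n = k by apply/eqP; rewrite eqn_leq nk -subn_eq0 km.
  by move: cn; rewrite nk' => /filt_k_eq0 ->; rewrite dot0.
have n_lt_k : (n < k)%N by rewrite -subn_gt0 km.
pose i := Ordinal n_lt_k; have ci : c \in filt C i by [].
set e := (c 0 (pivot i) : P).
have de := Lcoef_row_dvd ci (modp_small (size_qpoly _)).
set c2 := c - in_qpoly f (e %/ Lcoef (row i G)) *: row i G.
have c2n : c2 \in filt C n.+1.
  rewrite in_filtS subr_row_in_filt //= (LindS_filt i).
  apply/(Lind_gtP _ (Lind_lt (row_neq0 i))) => j ji.
  case: (ltngtP j (pivot i)) => [jp | pj | /val_inj ->]; first exact: subr_row_lt_pivot.
    by move: ji; rewrite leqNgt pj.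
  apply: val_inj; rewrite /= subr_row_pivot in_qpolyE -/e.
  have ef : e = e %% f by rewrite modp_small // size_qpoly.
  by rewrite {1}ef modp_submul divpK // subrr mod0p.
have -> : c = c2 + in_qpoly f (e %/ Lcoef (row i G)) *: row i G by rewrite subrK.
rewrite dotD dotZ (IH n.+1) ?a0 ?mulr0 ?addr0 //; first by rewrite subnS km.
by move=> j nj; apply/a0/ltnW.
Qed.

Lemma Lcoef_row_dvdf (i : 'I_k) : Lcoef (row i G) %| f.
Proof.
have [C0 _ _] := filt_Acode (ltnW (ltn_ord i)).
by apply: (Lcoef_row_dvd (c := 0)); rewrite // modpp mxE.
Qed.

Lemma cofactor_row_in_filt (i : 'I_k) :
  in_qpoly f (f %/ Lcoef (row i G)) *: row i G \in filt C i.+1.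
Proof.
have [C0 _ CZ] := filt_Acode (ltnW (ltn_ord i)).
rewrite in_filtS CZ ?row_in_filt //= (LindS_filt i).
apply/(Lind_gtP _ (Lind_lt (row_neq0 i))) => j ji.
case: (ltngtP j (pivot i)) => [jp | pj | /val_inj ->].
- by rewrite mxE (entry_lt_Lind (u := row i G) jp) mulr0.
- by move: ji; rewrite leqNgt pj.
apply: val_inj; rewrite /= mxE qpoly_mulE -Lcoef_rowE in_qpolyE.
by rewrite mulrC modp_mul mulrC divpK ?Lcoef_row_dvdf // modpp.
Qed.

Lemma dot_cofactor_row (i : 'I_k) a :
  (forall j : 'I_k, (i < j)%N -> dot a (row j G) = 0) ->
  dot a (in_qpoly f (f %/ Lcoef (row i G)) *: row i G) = 0.
Proof. by move=> a0; apply: (dot_filt_eq0 (n := i.+1)) (cofactor_row_in_filt i). Qed.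

Lemma dualE a : (a \in dual C) = [forall i : 'I_k, dot a (row i G) == 0].
Proof.
rewrite inE; apply/forallP/forallP => [aC i | a0 c].
  have iC : row i G \in C by apply: (subsetP (filt_subset C (leq0n i))); apply: row_in_filt.
  by have := aC (row i G); rewrite iC.
apply/implyP => cC; apply/eqP.
by apply: (dot_filt_eq0 (n := 0)) => // i _; apply/eqP.
Qed.

Lemma size_mx_to_seq : size (mx_to_seq G) = k.
Proof. by rewrite size_map size_enum_ord. Qed.

Lemma nth_mx_to_seq (i : 'I_k) : nth [::] (mx_to_seq G) i = entries (row i G).
Proof. by rewrite (nth_map i) ?size_enum_ord // nth_ord_enum; apply: eq_map => j; rewrite mxE. Qed.

Lemma dual_vecP u : u \in dual C <-> dual_vec f l (mx_to_seq G) (entries u).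
Proof.
rewrite dualE; split => [/forallP u0 | [_ _ u0]].
  split; rewrite ?size_entries ?reduced_entries // => i; rewrite size_mx_to_seq => ik.
  by rewrite -[i]/(nat_of_ord (Ordinal ik)) nth_mx_to_seq -dot_eq0.
apply/forallP => i; rewrite dot_eq0 -nth_mx_to_seq.
by apply: u0; rewrite size_mx_to_seq.
Qed.

Lemma divisor_rows_mx : divisor_rows f l (mx_to_seq G).
Proof.
split; rewrite size_mx_to_seq.
- move=> i ik; rewrite -[i]/(nat_of_ord (Ordinal ik)) nth_mx_to_seq.
  rewrite size_entries -Lind_entries -Lcoef_entries Lind_lt ?row_neq0 ?Lcoef_row_monic //.
  by split=> //; apply: Lcoef_row_dvdf.
- move=> i j ij jk; have ik := ltn_trans ij jk.
  rewrite -[i]/(nat_of_ord (Ordinal ik)) -[j]/(nat_of_ord (Ordinal jk)) !nth_mx_to_seq.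
  rewrite -!Lind_entries -(LindS_filt (Ordinal ik)).
  by have := row_in_filt (Ordinal jk); move/(subsetP (filt_subset C ij)); rewrite in_filtS => /andP[].
- move=> i ik a a0 sa ra; rewrite -[i]/(nat_of_ord (Ordinal ik)) nth_mx_to_seq -Lcoef_entries.
  pose va : V := \row_(j < l) in_qpoly f (nth 0 a j).
  have eva : entries va = a.
    apply: (@eq_from_nth _ 0); rewrite size_entries ?sa // => j jl.
    rewrite -[j]/(nat_of_ord (Ordinal jl)) nth_entries mxE in_qpoly_id //.
    by apply: (allP ra); apply: mem_nth; rewrite sa.
  have := dot_cofactor_row (i := Ordinal ik) (a := va).
  set x := in_qpoly f _ => dot_x.
  have {}dot_x : dot va (x *: row (Ordinal ik) G) = 0.
    apply: dot_x => j ij; apply/eqP; rewrite dot_eq0 eva -nth_mx_to_seq.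
    by apply: a0 => //; rewrite size_mx_to_seq.
  move/(congr1 (fun z : A => (z : P))): dot_x.
  rewrite /= dotZ qpoly_mulE dot_entries eva /x in_qpolyE.
  by rewrite modp_mul mulrC modp_mul mulrC => /modp_eq0P.
Qed.

Lemma recip_dualP u : u \in recip_dual C <-> dual_vec f l (mx_to_seq G) (rev (entries u)).
Proof.
rewrite -entries_rev_rV -dual_vecP; split => [/imsetP[v vC ->] | uC].
  by rewrite rev_rVK.
by apply/imsetP; exists (rev_rV u); rewrite ?rev_rVK.
Qed.

End BasisOfDivisors.

Lemma canonical_rows_CGM (S : {set V}) (D : seq P -> Prop) r (M : 'M[A]_(r, l)) Ms :
  (forall u, u \in S <-> D (rev (entries u))) -> canonical_rows f l D Ms ->
  size Ms = r -> (forall i, entries (row i M) = nth [::] Ms i) -> is_CGM S M.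
Proof.
move=> SD [Ms_rows Ms_incr Ms_cover Ms_deg] sMs rowM.
have iMs (i : 'I_r) : (i < size Ms)%N by rewrite sMs.
apply: is_CGM_rows => [i | i | i | t i ti | c /SD Dc c0 | t i ti].
- by have [_ _ + _ _] := Ms_rows _ (iMs i); rewrite -rowM => /SD.
- by have [_ _ _ + _] := Ms_rows _ (iMs i); rewrite -rowM nzseq_entries.
- by have [_ _ _ _] := Ms_rows _ (iMs i); rewrite Lcoef_entries rowM.
- by rewrite !Lind_entries !rowM; apply: Ms_incr.
- rewrite -nzseq_entries in c0.
  have [i iMs' [Li dvd_i]] := Ms_cover _ (size_entries c) (reduced_entries c) Dc c0.
  have ir : (i < r)%N by rewrite -sMs.
  by exists (Ordinal ir); rewrite !Lind_entries !Lcoef_entries rowM Li.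
- by rewrite ent_entries Lcoef_entries !Lind_entries !rowM; apply: Ms_deg.
Qed.

Section ReciprocalMatrix.
Variables (k : nat) (G : 'M[A]_(k, l)).
Variable Ht : seq (seq P).
Hypothesis HtildeE : Htilde G = map (map (in_qpoly f)) Ht.
Hypothesis Ht_rows : forall r, r \in Ht -> size r = l /\ reduced f r.

Lemma size_Htilde : size (Htilde G) = size (rev (map rev Ht)).
Proof. by rewrite HtildeE size_rev !size_map. Qed.

Lemma entries_row_HR i : entries (row i (HR G)) = nth [::] (rev (map rev Ht)) i.
Proof.
have iHt : (i < size Ht)%N by rewrite -(size_map (map (in_qpoly f))) -HtildeE.
have nHt : (size Ht - i.+1 < size Ht)%N by lia.
have [sr rr] := Ht_rows (mem_nth [::] nHt).
rewrite nth_rev ?size_map // (nth_map [::]) //.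
apply: (@eq_from_nth _ 0) => [|j]; rewrite size_entries ?size_rev ?sr // => jl.
rewrite -[j]/(nat_of_ord (Ordinal jl)) nth_entries !mxE /= nth_rev ?sr //.
move: (nat_of_ord i) (ltn_ord i) iHt nHt sr rr => {}i _ iHt nHt sr rr.
rewrite HtildeE size_map (nth_map [::]) // (nth_map 0 0) ?sr; last by lia.
by rewrite in_qpoly_id // (allP rr) // mem_nth // sr; lia.
Qed.

End ReciprocalMatrix.

Lemma Htilde_filter k (G : 'M[A]_(k, l)) :
  (forall r, r \in gen_mat_dual f l (mx_to_seq G) -> nzseq r -> reduced f r) ->
  Htilde G = map (map (in_qpoly f)) (filter nzseq (gen_mat_dual f l (mx_to_seq G))).
Proof.
move=> red_rows; rewrite /Htilde filter_map; congr map; apply: eq_in_filter => r rH /=.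
rewrite has_map; case: (boolP (nzseq r)) => nzr.
  apply/hasP; have [x xr x0] := hasP nzr; exists x => //=.
  by rewrite -[_ != 0]/((in_qpoly f x : P) != 0) in_qpoly_id ?(allP (red_rows r rH nzr)).
apply/hasPn => x xr /=; have /eqP -> : x == 0 by move/hasPn: nzr => /(_ x xr); rewrite negbK.
by rewrite in_qpoly0 eqxx.
Qed.

End RowEntries.

Theorem mainTheorem3 (F : finFieldType) (f : {poly F}) (l k : nat)
    (C : {set 'rV[{poly %/ f}]_l}) (G : 'M[{poly %/ f}]_(k, l)) :
  f \is monic -> (1 < size f)%N ->
  is_Acode C -> nzset C -> basis_of_divisors C G ->
  is_CGM (recip_dual C) (HR G).
Proof.
move=> monf szf codeC _ basisG.
set H := gen_mat_dual f l (mx_to_seq G).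
have canH : canonical_rows f l (dual_vec f l (mx_to_seq G)) (recip_rows H) :=
  gen_mat_dual_canonical monf szf (divisor_rows_mx monf szf codeC basisG).
have Ht_rows r := canonical_recip_rows (r := r) canH.
have HtildeE : Htilde G = map (map (in_qpoly f)) (filter nzseq H).
  apply: (Htilde_filter monf szf) => r rH nzr.
  by have [] := Ht_rows r; rewrite // mem_filter nzr.
apply: (canonical_rows_CGM monf szf (recip_dualP monf szf codeC basisG) canH).
- by rewrite (size_Htilde HtildeE).
- by move=> i; rewrite (entries_row_HR monf szf HtildeE Ht_rows).
Qed.
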